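(* Let $X=L^\infty[-1,1]$ and define $T:X\to X$ by $(Tx)(t)=0$ for $t\le 0$ and $(Tx)(t)=x(t)+x(-t)$ for $t>0$. Then $T$ is positive and satisfies condition $(\beta_+)$, but $T$ does not satisfy condition $(\beta)$.
   Context: For a subset $A$ of a vector lattice $X$, $A^d=\{x\in X: |x|\wedge|a|=0 \text{ for all } a\in A\}$ and $A^{dd}=(A^d)^d$. For $a,b\in X$ we write $a\lhd b$ if $\{a\}^{dd}\subseteq\{b\}^{dd}$. A linear operator $T$ satisfies condition $(\beta)$ if $Ta\lhd Tb$ whenever $a\lhd b$; it satisfies condition $(\beta_+)$ if $Ta\lhd Tb$ whenever $a\lhd b$ with $a,b\ge 0$. *)

(* L^oo[-1,1] is modelled by representatives:
   functions R -> R, measurable on [-1,1] and essentially bounded there;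
   all lattice relations (=0, >=0, disjointness) are taken a.e. on [-1,1]. *)
From HB Require Import structures.
From mathcomp Require Import all_boot all_order all_algebra.
From mathcomp Require Import all_classical all_reals all_analysis.
Set Implicit Arguments. Unset Strict Implicit. Unset Printing Implicit Defensive.
Import Order.TTheory GRing.Theory Num.Theory.
Local Open Scope classical_set_scope.
Local Open Scope ring_scope.

Section Linf.
Variable R : realType.

Definition Iset : set R := `[(-1)%R, 1%R]%classic.

Definition aeI (P : R -> Prop) : Prop :=
  {ae (@lebesgue_measure R), forall t, Iset t -> P t}.

Definition Linf (x : R -> R) : Prop :=
  measurable_fun Iset x /\ exists M : R, aeI (fun t => `|x t| <= M).

Definition nonnegX (x : R -> R) : Prop := aeI (fun t => 0 <= x t).

Definition disjX (x y : R -> R) : Prop :=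
  aeI (fun t => Num.min `|x t| `|y t| = 0).

(* A^d (as a set of representatives; closed under a.e. equality) *)
Definition dcomp (A : set (R -> R)) : set (R -> R) :=
  [set x | Linf x /\ forall a, A a -> disjX x a].

Definition ddcomp (A : set (R -> R)) : set (R -> R) := dcomp (dcomp A).

Definition lhd (a b : R -> R) : Prop := ddcomp [set a] `<=` ddcomp [set b].

Definition positiveOp (T : (R -> R) -> (R -> R)) : Prop :=
  forall x, Linf x -> nonnegX x -> nonnegX (T x).

Definition cond_beta (T : (R -> R) -> (R -> R)) : Prop :=
  forall a b, Linf a -> Linf b -> lhd a b -> lhd (T a) (T b).

Definition cond_beta_plus (T : (R -> R) -> (R -> R)) : Prop :=
  forall a b, Linf a -> Linf b -> nonnegX a -> nonnegX b ->
    lhd a b -> lhd (T a) (T b).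

Definition Tex (x : R -> R) : R -> R :=
  fun t => if t <= 0 then 0 else x t + x (- t).

End Linf.

(* For representatives of elements of L^oo[-1,1], a <| b holds iff b vanishes
   a.e. only where a does: one direction tests {a}^dd against the indicator of
   {b = 0}, which lies in {b}^d.  On t > 0, (Tx)(t) = x(t) + x(-t), and for
   nonnegative a, b this sum vanishes exactly where both summands do, so the
   support condition passes from a, b to Ta, Tb.  Signs break this: 1 <| s for
   s = -1 on [-1,0] and 1 on ]0,1], yet Ts = 0 while T1 = 2 on ]0,1]. *)
From Pilot Require Import Defs.
From mathcomp Require Import all_boot all_order all_algebra.
From mathcomp Require Import all_classical all_reals all_analysis.
Set Implicit Arguments. Unset Strict Implicit. Unset Printing Implicit Defensive.
Import Order.TTheory GRing.Theory Num.Theory.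
Local Open Scope classical_set_scope.
Local Open Scope ring_scope.

Lemma ae_lebesgue_oppr (R : realType) (P : R -> Prop) :
  {ae lebesgue_measure, forall t, P t} ->
  {ae lebesgue_measure, forall t, P (- t)}.
Proof.
case=> N [mN N0 PN]; exists (-%R @^-1` N); split.
- by have := measurable_realfun.oppr_measurable measurableT mN; rewrite setTI.
- by rewrite -[RHS]N0 -(lebesgue_measureN mN).
- by move=> t /= /PN.
Qed.

Lemma min_norm_eq0 (R : realDomainType) (u v : R) :
  (Num.min `|u| `|v| == 0) = (u == 0) || (v == 0).
Proof.
have [uv|vu] := ltP `|u| `|v|; rewrite normr_eq0.
- by case: (eqVneq v 0) uv => [->|_]; rewrite ?orbF // normr0 ltNge normr_ge0.
- by case: (eqVneq u 0) vu => [->|_] //=; rewrite normr0 normr_le0.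
Qed.

(* The library's [Filter (almost_everywhere _)] hint does not fire for
   [lebesgue_measure], so filter lemmas and [near] need this instance. *)
#[local] Instance lebesgue_ae_filter (R : realType) :
  Filter (almost_everywhere (@lebesgue_measure R)) :=
  ae_filter_ringOfSetsType (@lebesgue_measure R).

Section Linf_theory.
Variable R : realType.
Implicit Types (P Q : R -> Prop) (a b x y : R -> R).

Lemma Iset_opp (t : R) : Iset t -> Iset (- t).
Proof.
by rewrite /Iset /= !in_itv /= => /andP[? ?]; rewrite lerN2 lerNl; apply/andP.
Qed.

Lemma measurable_Iset : measurable (@Iset R).
Proof. exact: measurable_itv. Qed.

Lemma aeIW P : (forall t, Iset t -> P t) -> aeI P.
Proof. by move=> PI; apply: aeW. Qed.

Lemma aeIS P Q : (forall t, Iset t -> P t -> Q t) -> aeI P -> aeI Q.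
Proof. by move=> PQ; rewrite /aeI; apply: filterS => t PIt It; exact/PQ/PIt. Qed.

Lemma aeI_opp P : aeI P -> aeI (fun t => P (- t)).
Proof.
rewrite /aeI => /ae_lebesgue_oppr; apply: filterS => t PIt It.
by apply: PIt; exact: Iset_opp.
Qed.

Lemma not_aeI_le0 : ~ aeI (fun t : R => t <= 0).
Proof.
case=> N [mN N0 sN]; have sub : `]0, 1]%classic `<=` N.
  move=> t; rewrite /= in_itv /= => /andP[t0 t1]; apply: sN => /=.
  rewrite leNgt t0 /Iset /= in_itv /= t1 andbT.
  by move=> /(_ (le_trans (lerN10 _) (ltW t0))).
have mu01 : (1 <= @lebesgue_measure R `]0%R, 1%R]%classic)%E.
  by rewrite lebesgue_measure_itv /= lte_fin ltr01 oppr0 adde0.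
have muN0 : (@lebesgue_measure R N <= 0)%E by rewrite N0.
have := @le_measure _ _ (measurableTypeR R) (@lebesgue_measure R) _ _ _ _ sub.
rewrite !inE => /(_ (measurable_itv _) mN) mu_sub.
by have := le_trans mu01 (le_trans mu_sub muN0); rewrite lee_fin ler10.
Qed.

Lemma measurable_fun_comp_opp x :
  measurable_fun (@Iset R) x -> measurable_fun (@Iset R) (fun t => x (- t)).
Proof.
move=> mx; apply: (measurable_comp (E := @Iset R) measurable_Iset _ mx).
- by move=> _ [t It <-]; exact: Iset_opp.
- exact: measurable_realfun.oppr_measurable.
Qed.

Lemma measurable_fun_if_le0 x y :
  measurable_fun (@Iset R) x -> measurable_fun (@Iset R) y ->
  measurable_fun (@Iset R) (fun t => if t <= 0 then x t else y t).
Proof.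
move=> mx my; apply: measurable_fun_if => //; first exact: measurable_Iset.
- by apply: measurable_realfun.measurable_fun_ler => //; exact: measurable_id.
- by apply: measurable_funS mx; [exact: measurable_itv | move=> t []].
- by apply: measurable_funS my; [exact: measurable_itv | move=> t []].
Qed.

Lemma Linf_indic (A : set R) : measurable A -> Linf \1_A.
Proof.
move=> mA; split; first exact: measurable_realfun.measurable_indic.
exists 1; apply: aeIW => t _; rewrite indicE.
by case: (_ \in _); rewrite ?normr1 ?normr0.
Qed.

Lemma Linf_Tex x : Linf x -> Linf (Tex x).
Proof.
move=> [mx [M xM]]; split.
  apply: (@measurable_fun_if_le0 (cst 0) (fun t => x t + x (- t))).
    exact: measurable_cst.
  by apply: measurable_realfun.measurable_funD => //; exact: measurable_fun_comp_opp.
exists (`|M| + `|M|); have xNM := aeI_opp xM; move: xM xNM; rewrite /aeI => xM xNM.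
near=> t => It; rewrite /Tex; case: ifPn => _; first by rewrite normr0 addr_ge0.
apply: (le_trans (ler_normD _ _)); apply: lerD; apply: (le_trans _ (ler_norm M)).
- exact: (near xM t).
- exact: (near xNM t).
Unshelve. all: by end_near.
Qed.

Lemma Tex_ge0 : positiveOp (@Tex R).
Proof.
move=> x _ x0; have xN0 := aeI_opp x0.
move: x0 xN0; rewrite /nonnegX /aeI => x0 xN0.
near=> t => It; rewrite /Tex; case: ifPn => // _.
by rewrite addr_ge0 //; [exact: (near x0 t) | exact: (near xN0 t)].
Unshelve. all: by end_near.
Qed.

Lemma disjXE x y : disjX x y <-> aeI (fun t => (x t == 0) || (y t == 0)).
Proof.
split; apply: aeIS => t _; first by move/eqP; rewrite min_norm_eq0.
by rewrite -min_norm_eq0 => /eqP.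
Qed.

Lemma ddcomp_set1 a : Linf a -> ddcomp [set a] a.
Proof.
move=> La; split => // y [_ ya]; apply: aeIS (ya a erefl) => t _.
by rewrite minC.
Qed.

Lemma lhdW a b : aeI (fun t => a t != 0 -> b t != 0) -> lhd a b.
Proof.
move=> ab x [Lx xa]; split => // y [Ly yb]; apply: xa; split => // _ ->.
move: (yb b erefl) => /(disjXE y b) yb0; apply/(disjXE y a).
move: ab yb0; rewrite /aeI => ab yb0.
near=> t => It; have abt : a t != 0 -> b t != 0 by exact: (near ab t).
have /orP[->//|/eqP bt0] : (y t == 0) || (b t == 0) by exact: (near yb0 t).
by case: (eqVneq (a t) 0) => [|/abt]; rewrite ?orbT // bt0 eqxx.
Unshelve. all: by end_near.
Qed.

Lemma lhd_support a b : Linf a -> measurable_fun (@Iset R) b -> lhd a b ->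
  aeI (fun t => a t != 0 -> b t != 0).
Proof.
move=> La mb ab; pose Z := @Iset R `&` b @^-1` [set 0].
have mZ : measurable Z by exact: mb measurable_Iset _ (measurable_set1 0).
have Z_dcomp_b : Defs.dcomp [set b] \1_Z.
  split; first exact: Linf_indic.
  move=> _ ->; apply/disjXE; apply: aeIW => t It; rewrite indicE.
  by case: (boolP (t \in Z)) => [/set_mem[_ ->]|_]; rewrite ?eqxx ?orbT.
have /disjXE := (ab a (ddcomp_set1 La)).2 _ Z_dcomp_b.
apply: aeIS => t It /orP[/eqP->|]; first by rewrite eqxx.
rewrite indicE; case: (boolP (t \in Z)) => [_|tZ _]; first by rewrite oner_eq0.
by apply/contra_neq => bt0; apply: contraNP tZ => _; apply/mem_set.
Qed.

Lemma lhdP a b : Linf a -> Linf b ->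
  lhd a b <-> aeI (fun t => a t != 0 -> b t != 0).
Proof. by move=> La [mb _]; split; [exact: lhd_support | exact: lhdW]. Qed.

Lemma Tex_beta_plus : cond_beta_plus (@Tex R).
Proof.
move=> a b La Lb a0 b0 /(lhdP La Lb) ab; apply/(lhdP (Linf_Tex La) (Linf_Tex Lb)).
have aN0 := aeI_opp a0; have bN0 := aeI_opp b0; have abN := aeI_opp ab.
move: a0 b0 ab aN0 bN0 abN; rewrite /nonnegX /aeI => a0 b0 ab aN0 bN0 abN.
near=> t => It; rewrite /Tex; case: ifPn => // _.
have [at0 bt0] : 0 <= a t /\ 0 <= b t.
  by split; [exact: (near a0 t) | exact: (near b0 t)].
have [atN0 btN0] : 0 <= a (- t) /\ 0 <= b (- t).
  by split; [exact: (near aN0 t) | exact: (near bN0 t)].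
have abt : a t != 0 -> b t != 0 by exact: (near ab t).
have abtN : a (- t) != 0 -> b (- t) != 0 by exact: (near abN t).
rewrite paddr_eq0 // paddr_eq0 // !negb_and.
by case/orP => [/abt|/abtN] ->; rewrite ?orbT.
Unshelve. all: by end_near.
Qed.

Lemma Tex_not_beta : ~ cond_beta (@Tex R).
Proof.
pose b : R -> R := fun t => if t <= 0 then -1 else 1.
have Lb : Linf b.
  split; first by apply: measurable_fun_if_le0; exact: measurable_cst.
  by exists 1; apply: aeIW => t _; rewrite /b; case: ifP; rewrite ?normrN normr1.
have Tb0 : Tex b = cst 0.
  apply/funext => t; rewrite /Tex /b; have [//|t0] := leP t 0.
  by rewrite oppr_le0 (ltW t0) addrN.
have L1 : Linf (cst (1 : R)).
  by split; [exact: measurable_cst | exists 1; apply: aeIW => t _; rewrite normr1].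
have lhd1b : lhd (cst 1) b.
  apply/(lhdP L1 Lb)/aeIW => t _ _.
  by rewrite /b; case: ifP; rewrite ?oppr_eq0 oner_eq0.
move=> /(_ _ _ L1 Lb lhd1b) /(lhdP (Linf_Tex L1) (Linf_Tex Lb)).
rewrite Tb0 => T10.
apply: not_aeI_le0; apply: aeIS T10 => t _; rewrite /Tex; case: leP => //= _.
by move=> /(_ (negbT (gt_eqF (addr_gt0 ltr01 ltr01)))); rewrite eqxx.
Qed.

End Linf_theory.

Theorem mainTheorem15 (R : realType) :
  (forall x : R -> R, Linf x -> Linf (Tex x)) /\
  positiveOp (@Tex R) /\ cond_beta_plus (@Tex R) /\ ~ cond_beta (@Tex R).
Proof.
split; first exact: Linf_Tex.
split; first exact: Tex_ge0.
split; [exact: Tex_beta_plus | exact: Tex_not_beta].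
Qed.
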